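(* Let $l\ge 1$, $d\ge 2$. The cone $\sigma^\vee\subset M_\mathbf{R}$ has exactly $d^l$ facets: for each $\vec{j}=(j_1,\dots,j_l)\in\{1,\dots,d\}^l$, the cone $\tau_{\vec j}$ generated by $\{e_{ij}:1\le i\le l,\ j\ne j_i\}$ is a facet, and these are all the facets. Moreover $\sigma^\vee=\bigcap_{\vec j}\{\varphi_{\vec j}\ge0\}$, where $\varphi_{\vec j}$ is the linear functional on $M$ with $\varphi_{\vec j}(e_{ij})=0$ for $j\ne j_i$ and $\varphi_{\vec j}(e_{ij_i})=1$.
   Context: Let $\mathbf{Z}^{ld}$ have basis $e_{ij}$ ($1\le i\le l$, $1\le j\le d$), $\epsilon_i=e_{i1}+\dots+e_{id}$, $L\subset\mathbf{Z}^{ld}$ the (saturated) subgroup generated by $\epsilon_1-\epsilon_2,\dots,\epsilon_1-\epsilon_l$, and $M=\mathbf{Z}^{ld}/L$ (a lattice of rank $ld-l+1$); write $e_{ij}$ and $\epsilon=\epsilon_1=\dots=\epsilon_l$ for their images in $M$. $\sigma^\vee\subset M_\mathbf{R}$ is the cone generated by all $e_{ij}$. *)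

From HB Require Import structures.
From mathcomp Require Import all_boot all_order all_algebra.
Set Implicit Arguments. Unset Strict Implicit. Unset Printing Implicit Defensive.
Import Order.TTheory GRing.Theory Num.Theory.
Local Open Scope ring_scope.

(* Conventions: Z^{ld} is realised (after tensoring with R) as the space of
   l x d matrices 'M[R]_(l,d); e_ij = delta_mx i j (indices 0-based).
   M_R = R^{ld}/L_R is realised as 'rV[R]_n together with a linear surjection
   pi : 'M_(l,d) -> 'rV_n whose kernel is exactly L_R. *)

Definition eps (R : nzRingType) (l d : nat) (i : 'I_l) : 'M[R]_(l, d) :=
  \sum_(j < d) delta_mx i j.

Definition in_L (R : nzRingType) (l d : nat) (i0 : 'I_l) (x : 'M[R]_(l, d)) : Prop :=
  exists a : 'I_l -> R, x = \sum_(i < l) a i *: (eps R d i0 - eps R d i).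

Definition cone_gen (R : realFieldType) (n : nat) (I : finType) (P : pred I)
  (g : I -> 'rV[R]_n) (v : 'rV[R]_n) : Prop :=
  exists lam : I -> R, (forall k, 0 <= lam k) /\ v = \sum_(k | P k) lam k *: g k.

Definition evalf (R : nzRingType) (n : nat) (w : 'cV[R]_n) (v : 'rV[R]_n) : R :=
  (v *m w) 0 0.

Definition is_face (R : realFieldType) (n : nat) (C F : 'rV[R]_n -> Prop) : Prop :=
  exists w : 'cV[R]_n,
    (forall v, C v -> 0 <= evalf w v) /\
    (forall v, F v <-> (C v /\ evalf w v = 0)).

Definition dim_span (R : realFieldType) (n : nat) (S : 'rV[R]_n -> Prop) (k : nat) : Prop :=
  (exists A : 'M[R]_(k, n), (forall i, S (row i A)) /\ \rank A = k) /\
  (forall A : 'M[R]_(k.+1, n), (forall i, S (row i A)) -> (\rank A < k.+1)%N).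

Definition is_facet (R : realFieldType) (n : nat) (C F : 'rV[R]_n -> Prop) : Prop :=
  is_face C F /\ exists k, dim_span C k.+1 /\ dim_span F k.

Definition sigma_dual (R : realFieldType) (l d n : nat)
  (pi : 'M[R]_(l, d) -> 'rV[R]_n) : 'rV[R]_n -> Prop :=
  cone_gen predT (fun p : 'I_l * 'I_d => pi (delta_mx p.1 p.2)).

Definition tau (R : realFieldType) (l d n : nat)
  (pi : 'M[R]_(l, d) -> 'rV[R]_n) (jv : {ffun 'I_l -> 'I_d}) : 'rV[R]_n -> Prop :=
  cone_gen (fun p : 'I_l * 'I_d => p.2 != jv p.1)
           (fun p : 'I_l * 'I_d => pi (delta_mx p.1 p.2)).

Definition is_phi (R : realFieldType) (l d n : nat)
  (pi : 'M[R]_(l, d) -> 'rV[R]_n) (jv : {ffun 'I_l -> 'I_d}) (w : 'cV[R]_n) : Prop :=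
  forall (i : 'I_l) (j : 'I_d), evalf w (pi (delta_mx i j)) = (j == jv i)%:R.

(* Write g_ij for the image of e_ij in M_R.  The only linear relations among
   the g_ij say that the row sums sum_j g_ij do not depend on i.  Hence, for
   every choice jv of one column in each row, the g_ij with j <> jv i together
   with g_{i0 jv(i0)} form a basis of M_R, and phi_jv is a vector of the dual
   basis.  It is nonnegative on all generators and vanishes on exactly the
   generators of tau_jv, one fewer than a basis: tau_jv is a facet.
   Conversely, a facet is cut out by a functional w >= 0 on the generators that
   is not zero on all of them; as w has the same sum on every row, each row i
   has a generator g_{i jv(i)} with w > 0, so the facet lies in tau_jv, and the
   dimensions force equality.  Finally, if phi_jv(v) >= 0 for all jv, lift v to
   a matrix x; choosing jv at the row minima shows that the minima have a
   nonnegative sum s, and replacing in each row the minimum by s/l changes x by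
   an element of L and makes it entrywise nonnegative. *)

From Pilot Require Import Defs.
From HB Require Import structures.
From mathcomp Require Import all_boot all_order all_algebra.
Import Order.TTheory GRing.Theory Num.Theory.
Import Defs. (* [dim_span] is also the name of a lemma of [vector]. *)
Local Open Scope ring_scope.
Set Implicit Arguments. Unset Strict Implicit.

Section FreeRows.
Variables (F : fieldType) (m m' n : nat).

Lemma row_free_rowsub (f : 'I_m' -> 'I_m) (A : 'M[F]_(m, n)) :
  injective f -> row_free A -> row_free (rowsub f A).
Proof.
move=> f_inj freeA; apply: inj_row_free => v.
rewrite rowsubE mulmxA -(mul0mx _ A) => /(row_free_inj freeA) vsel0.
apply/rowP => i; move/rowP/(_ (f i)): vsel0; rewrite !mxE => <-.
rewrite (bigD1 i) //= !mxE eqxx mulr1 big1 ?addr0 // => k /negbTE ki.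
by rewrite !mxE (inj_eq f_inj) ki mulr0.
Qed.

End FreeRows.

Section ConeDimension.
Variables (R : realFieldType) (n : nat).
Implicit Types (S : 'rV[R]_n -> Prop) (w : 'cV[R]_n) (v : 'rV[R]_n).

Lemma evalf_sum (I : finType) (P : pred I) w (g : I -> 'rV[R]_n) :
  evalf w (\sum_(k | P k) g k) = \sum_(k | P k) evalf w (g k).
Proof. by rewrite /evalf mulmx_suml summxE. Qed.

Lemma evalfZ w a v : evalf w (a *: v) = a * evalf w v.
Proof. by rewrite /evalf -scalemxAl mxE. Qed.

Lemma evalfB w u v : evalf w (u - v) = evalf w u - evalf w v.
Proof. by rewrite /evalf mulmxBl !mxE. Qed.

Lemma dim_span_ext S S' k : (forall v, S v <-> S' v) -> dim_span S k -> dim_span S' k.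
Proof.
move=> eqS [[A [SA rkA]] rk_small]; split; first by exists A; split=> // i; apply/eqS.
by move=> B SB; apply: rk_small => i; apply/eqS.
Qed.

Lemma dim_span_row_free S k (B : 'M[R]_(k, n)) :
  row_free B -> (forall i, S (row i B)) -> (forall v, S v -> (v <= B)%MS) ->
  dim_span S k.
Proof.
move=> freeB SB spanB; split; first by exists B; split=> //; apply/eqP.
move=> A SA; have /mxrankS : (A <= B)%MS by apply/row_subP => i; apply: spanB.
by rewrite (eqP freeB) ltnS.
Qed.

Lemma dim_span_le S k k' : dim_span S k -> dim_span S k' -> (k <= k')%N.
Proof.
move=> [[A [SA rkA]] _] [_ rk_small]; rewrite leqNgt; apply/negP => lt_k'k.
have freeA : row_free A by rewrite /row_free rkA.
have widen_inj : injective (widen_ord lt_k'k) by move=> i j /(congr1 val) /= /ord_inj.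
suff: (\rank (rowsub (widen_ord lt_k'k) A) < k'.+1)%N.
  by rewrite (eqP (row_free_rowsub widen_inj freeA)) ltnn.
by apply: rk_small => i; rewrite row_rowsub.
Qed.

Lemma dim_span_unique S k k' : dim_span S k -> dim_span S k' -> k = k'.
Proof. by move=> Sk Sk'; apply/eqP; rewrite eqn_leq (dim_span_le Sk Sk') (dim_span_le Sk' Sk). Qed.

Variables (I : finType) (g : I -> 'rV[R]_n).
Implicit Types P Q : pred I.

Definition gens_mx P : 'M[R]_(#|P|, n) := \matrix_(r < #|P|) g (enum_val r).

Lemma row_gens_mx P r : row r (gens_mx P) = g (enum_val r).
Proof. by rewrite rowK. Qed.

Lemma gen_sub_gens_mx P p : P p -> (g p <= gens_mx P)%MS.
Proof.
move=> Pp; have Pp' : p \in P by [].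
by rewrite -(enum_rankK_in Pp' Pp') -row_gens_mx row_sub.
Qed.

Lemma cone_gen_gen P p : P p -> cone_gen P g (g p).
Proof.
move=> Pp; exists (fun q => (q == p)%:R); split=> [q|]; first exact: ler0n.
rewrite (bigD1 p) //= eqxx scale1r big1 ?addr0 // => q /andP[_ /negbTE ->].
by rewrite scale0r.
Qed.

Lemma cone_gen_ext P Q v : P =1 Q -> cone_gen P g v <-> cone_gen Q g v.
Proof.
by move=> eqPQ; split=> -[lam [lam_ge0 ->]]; exists lam; split=> //;
  apply: eq_bigl => p; rewrite eqPQ.
Qed.

Lemma cone_gen_sub P m (B : 'M[R]_(m, n)) v :
  (forall p, P p -> (g p <= B)%MS) -> cone_gen P g v -> (v <= B)%MS.
Proof.
by move=> gB [lam [_ ->]]; apply: summx_sub => p Pp; apply/scalemx_sub/gB.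
Qed.

Lemma cone_gen_evalf_ge0 P w v :
  (forall p, P p -> 0 <= evalf w (g p)) -> cone_gen P g v -> 0 <= evalf w v.
Proof.
move=> w_ge0 [lam [lam_ge0 ->]]; rewrite evalf_sum; apply: sumr_ge0 => p Pp.
by rewrite evalfZ mulr_ge0 ?w_ge0.
Qed.

Lemma cone_gen_face P w v :
  (forall p, P p -> 0 <= evalf w (g p)) ->
  (cone_gen P g v /\ evalf w v = 0) <->
  cone_gen (fun p => P p && (evalf w (g p) == 0)) g v.
Proof.
move=> w_ge0; split.
- move=> [[lam [lam_ge0 def_v]] wv0]; exists lam; split=> //; rewrite def_v.
  rewrite (bigID (fun p => evalf w (g p) == 0)) /= [X in _ + X]big1 ?addr0 //.
  move=> p /andP[Pp /negbTE wp_neq0].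
  move: wv0; rewrite def_v evalf_sum; under eq_bigr do rewrite evalfZ.
  move/(psumr_eq0P (fun q Pq => mulr_ge0 (lam_ge0 q) (w_ge0 q Pq)))/(_ p Pp)/eqP.
  by rewrite mulf_eq0 wp_neq0 orbF => /eqP ->; rewrite scale0r.
- move=> [lam [lam_ge0 ->]]; split.
    exists (fun p => if evalf w (g p) == 0 then lam p else 0); split.
      by move=> p; case: ifP.
    rewrite [RHS](bigID (fun p => evalf w (g p) == 0)) /= [X in _ + X]big1.
      by rewrite addr0; apply: eq_bigr => p /andP[_ ->].
    by move=> p /andP[_ /negbTE ->]; rewrite scale0r.
  rewrite evalf_sum big1 // => p /andP[_ /eqP wp0].
  by rewrite evalfZ wp0 mulr0.
Qed.

Definition free_gens P :=
  forall c : I -> R, \sum_(p | P p) c p *: g p = 0 -> forall p, P p -> c p = 0.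

Lemma free_gensS P Q : (forall p, P p -> Q p) -> free_gens Q -> free_gens P.
Proof.
move=> PQ freeQ c sum_c0 p Pp.
have := freeQ (fun q => if P q then c q else 0) _ p (PQ p Pp); rewrite Pp; apply.
rewrite (bigID P) /= [X in _ + X]big1 ?addr0; last first.
  by move=> q /andP[_ /negbTE ->]; rewrite scale0r.
rewrite -[RHS]sum_c0; apply: eq_big => q; last by move=> /andP[_ ->].
by case Pq: (P q); rewrite ?andbT ?andbF //; apply: PQ.
Qed.

Lemma free_gens_mx P : free_gens P -> row_free (gens_mx P).
Proof.
move=> freeP; apply: inj_row_free => u u0; apply/rowP => r; rewrite mxE.
have Pr : enum_val r \in P := enum_valP r.
pose c p := u 0 (enum_rank_in Pr p).
have := freeP c _ (enum_val r) Pr; rewrite /c enum_valK_in; apply.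
rewrite (big_enum_val (A := P) (fun p => c p *: g p)) -[RHS]u0 mulmx_sum_row.
by apply: eq_bigr => i _; rewrite /c enum_valK_in row_gens_mx.
Qed.

Lemma free_gens_dual P (t : I -> R) :
  free_gens P -> exists w, forall p, P p -> evalf w (g p) = t p.
Proof.
move=> /free_gens_mx/row_freeP[B GB].
exists (B *m \col_r t (enum_val r)) => p Pp; have Pp' : p \in P by [].
rewrite /evalf -{1}(enum_rankK_in Pp' Pp') -row_gens_mx -row_mul mulmxA GB mul1mx.
by rewrite !mxE (enum_rankK_in Pp' Pp').
Qed.

Lemma dim_span_cone_le P k : dim_span (cone_gen P g) k -> (k <= #|P|)%N.
Proof.
move=> [[A [coneA <-]] _].
have /mxrankS : (A <= gens_mx P)%MS.
  by apply/row_subP => i; apply: cone_gen_sub (coneA i) => p; apply: gen_sub_gens_mx.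
by move/leq_trans; apply; apply: rank_leq_row.
Qed.

Lemma dim_span_cone P Q :
  (forall p, Q p -> P p) -> free_gens Q -> (forall p, P p -> (g p <= gens_mx Q)%MS) ->
  dim_span (cone_gen P g) #|Q|.
Proof.
move=> QP freeQ spanQ; apply: dim_span_row_free (free_gens_mx freeQ) _ _.
  by move=> r; rewrite row_gens_mx; apply/cone_gen_gen/QP/enum_valP.
by move=> v; apply: cone_gen_sub.
Qed.

Lemma dim_span_cone_subset_eq P Q k :
  dim_span (cone_gen P g) k -> P \subset Q -> #|Q| = k -> P =i Q.
Proof.
move=> /dim_span_cone_le le_kP subPQ cardQ; apply: (elimT (subset_cardP _) subPQ).
by apply/eqP; rewrite eqn_leq subset_leq_card // cardQ.
Qed.

End ConeDimension.

Section RowConstantMatrices.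
Variables (R : nzRingType) (l d : nat).

Lemma eps_entry (i' i : 'I_l) (j : 'I_d) : eps R d i' i j = (i == i')%:R.
Proof.
rewrite /eps summxE (bigD1 j) //= mxE eqxx andbT big1 ?addr0 // => k /negbTE kj.
by rewrite mxE (eq_sym j) kj andbF.
Qed.

Lemma sum_eps_entry (c : 'I_l -> R) i j : (\sum_k c k *: eps R d k) i j = c i.
Proof.
rewrite summxE (bigD1 i) //= mxE eps_entry eqxx mulr1 big1 ?addr0 // => k /negbTE ki.
by rewrite mxE eps_entry eq_sym ki mulr0.
Qed.

Lemma sum_delta_entry (P : pred ('I_l * 'I_d)) (c : 'I_l * 'I_d -> R) i j :
  (\sum_(p | P p) c p *: (delta_mx p.1 p.2 : 'M[R]_(l, d))) i j =
  if P (i, j) then c (i, j) else 0.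
Proof.
have delta_ij (p : 'I_l * 'I_d) :
    (delta_mx p.1 p.2 : 'M[R]_(l, d)) i j = (p == (i, j))%:R.
  by case: p => i' j'; rewrite mxE xpair_eqE (eq_sym i) (eq_sym j).
rewrite summxE; under eq_bigr do rewrite mxE delta_ij.
case: ifP => [Pij | /negbT nPij]; last first.
  by apply: big1 => p Pp; case: eqP Pp nPij => [-> -> | _ _ _]; rewrite ?mulr0.
rewrite (bigD1 (i, j)) //= eqxx mulr1 big1 ?addr0 // => p /andP[_ /negbTE->].
by rewrite mulr0.
Qed.

Lemma in_L_sum_eps i0 (x : 'M[R]_(l, d)) :
  in_L i0 x <-> exists2 c : 'I_l -> R, \sum_i c i = 0 & x = \sum_i c i *: eps R d i.
Proof.
have sum_at_i0 (s : R) (F : 'I_l -> 'M[R]_(l, d)) :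
    \sum_i ((i == i0)%:R * s) *: F i = s *: F i0.
  rewrite (bigD1 i0) //= eqxx mul1r big1 ?addr0 // => i /negbTE ->.
  by rewrite mul0r scale0r.
split=> [[a ->] | [c c0 ->]].
  set s := \sum_k a k; exists (fun i => (i == i0)%:R * s - a i).
    rewrite sumrB (bigD1 i0) //= eqxx mul1r big1 ?addr0 ?subrr // => i /negbTE ->.
    by rewrite mul0r.
  under [RHS]eq_bigr do rewrite scalerBl.
  under [LHS]eq_bigr do rewrite scalerBr.
  by rewrite !sumrB sum_at_i0 scaler_suml.
exists (fun i => - c i).
under [RHS]eq_bigr do rewrite scaleNr scalerBr opprB.
by rewrite sumrB -scaler_suml c0 scale0r subr0.
Qed.

End RowConstantMatrices.

Section GraphBasis.
Variables (R : realFieldType) (l d n : nat) (hl : (0 < l)%N).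
Variable pi : {linear 'M[R]_(l, d) -> 'rV[R]_n}.
Hypothesis pi_ker : forall x : 'M[R]_(l, d), pi x = 0 <-> in_L (Ordinal hl) x.
Local Notation i0 := (Ordinal hl).

Definition gen (p : 'I_l * 'I_d) : 'rV[R]_n := pi (delta_mx p.1 p.2).

Definition off_graph (jv : {ffun 'I_l -> 'I_d}) : pred ('I_l * 'I_d) :=
  [pred p | p.2 != jv p.1].

Definition graph_basis (jv : {ffun 'I_l -> 'I_d}) : pred ('I_l * 'I_d) :=
  [pred p | (p == (i0, jv i0)) || off_graph jv p].

Lemma pi_gen_sum x : pi x = \sum_p x p.1 p.2 *: gen p.
Proof.
rewrite {1}(matrix_sum_delta x) pair_bigA linear_sum; apply: eq_bigr => p _.
by rewrite linearZ.
Qed.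

Lemma pi_sum_eps (c : 'I_l -> R) : \sum_i c i = 0 -> pi (\sum_i c i *: eps R d i) = 0.
Proof. by move=> c0; apply/pi_ker/in_L_sum_eps; exists c. Qed.

Lemma pi_eps i : pi (eps R d i) = pi (eps R d i0).
Proof.
apply/eqP; rewrite -subr_eq0 -linearB; apply/eqP/pi_ker.
exists (fun k => - (k == i)%:R).
rewrite (bigD1 i) //= eqxx scaleN1r opprB big1 ?addr0 // => k /negbTE ->.
by rewrite oppr0 scale0r.
Qed.

Lemma gen_graph (jv : {ffun 'I_l -> 'I_d}) i :
  gen (i, jv i) = \sum_j gen (i0, j) - \sum_(j | j != jv i) gen (i, j).
Proof.
have := pi_eps i; rewrite /eps !linear_sum (bigD1 (jv i)) //= /gen /= => <-.
by rewrite sumrN addrK.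
Qed.

Lemma gen_sub_graph_basis jv p : (gen p <= gens_mx gen (graph_basis jv))%MS.
Proof.
case Sp: (graph_basis jv p); first exact: gen_sub_gens_mx.
case: p Sp => i j /norP[_ /negPn/eqP /= ->]; rewrite gen_graph.
apply: addmx_sub.
  apply: summx_sub => j' _; apply: gen_sub_gens_mx.
  by rewrite /graph_basis /= xpair_eqE eqxx orbN.
rewrite eqmx_opp summx_sub // => j' j'_off.
by apply: gen_sub_gens_mx; rewrite /graph_basis /off_graph /= j'_off orbT.
Qed.

Lemma free_graph_basis jv : free_gens gen (graph_basis jv).
Proof.
(* A kernel element is constant on rows, with zero total; the rows i <> i0
   vanish at the missing entry (i, jv i), and then row i0 by the total. *)
move=> c sum_c0 p Sp.
set X := \sum_(q | graph_basis jv q) c q *: (delta_mx q.1 q.2 : 'M[R]_(l, d)).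
have /pi_ker/in_L_sum_eps[r r_sum0 def_X] : pi X = 0.
  by rewrite linear_sum -[RHS]sum_c0; apply: eq_bigr => q _; rewrite linearZ.
have r_off i : i != i0 -> r i = 0.
  move=> i_neq0; rewrite -(sum_eps_entry r i (jv i)) -def_X sum_delta_entry /=.
  by rewrite /graph_basis /off_graph /= xpair_eqE (negbTE i_neq0) eqxx.
have r_i0 : r i0 = 0.
  by move: r_sum0; rewrite (bigD1 i0) //= big1 ?addr0 // => i /r_off.
have := sum_delta_entry (graph_basis jv) c p.1 p.2.
rewrite -surjective_pairing Sp -/X def_X sum_eps_entry => <-.
by case: (eqVneq p.1 i0) => [-> | /r_off].
Qed.

Lemma card_graph_basis jv : #|graph_basis jv| = #|off_graph jv|.+1.
Proof.
rewrite (@eq_card _ _ [predU1 (i0, jv i0) & off_graph jv]) => [|p]; last by rewrite !inE.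
by rewrite cardU1 inE /off_graph /= eqxx.
Qed.

Lemma dim_sigma_dual jv : dim_span (sigma_dual pi) #|off_graph jv|.+1.
Proof.
rewrite -card_graph_basis; apply: (@dim_span_cone _ _ _ gen) => // [|p _].
  exact: free_graph_basis.
exact: gen_sub_graph_basis.
Qed.

Lemma dim_tau jv : dim_span (tau pi jv) #|off_graph jv|.
Proof.
apply: (@dim_span_cone _ _ _ gen) => [p //| | p off_p]; last exact: gen_sub_gens_mx.
apply: (free_gensS _ (@free_graph_basis jv)) => p off_p.
by rewrite /graph_basis /= off_p orbT.
Qed.

Lemma phi_exists jv : exists w, is_phi pi jv w.
Proof.
have [w w_basis] := free_gens_dual (fun p => (p.2 == jv p.1)%:R) (@free_graph_basis jv).
have w_off i j : j != jv i -> evalf w (gen (i, j)) = 0.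
  by move=> j_off; rewrite w_basis /= ?(negbTE j_off) // /graph_basis /off_graph /= j_off orbT.
exists w => i j; case: (boolP (graph_basis jv (i, j))) => [/w_basis // |].
rewrite /graph_basis /off_graph /= => /norP[_ /negPn/eqP ->].
rewrite -/(gen (i, jv i)) gen_graph evalfB !evalf_sum.
rewrite [X in _ - X]big1 => [|j' /w_off //]; rewrite subr0.
rewrite (bigD1 (jv i0)) //= big1 => [|j' /w_off //].
by rewrite addr0 w_basis /graph_basis /= !eqxx.
Qed.

Lemma phi_sigma_ge0 jv w v : is_phi pi jv w -> sigma_dual pi v -> 0 <= evalf w v.
Proof. by move=> phi_w; apply: cone_gen_evalf_ge0 => p _; rewrite phi_w ler0n. Qed.

Lemma tau_face jv w v :
  is_phi pi jv w -> tau pi jv v <-> sigma_dual pi v /\ evalf w v = 0.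
Proof.
move=> phi_w; have w_ge0 p : predT p -> 0 <= evalf w (gen p) by rewrite phi_w ler0n.
apply: iff_trans (iff_sym (cone_gen_face v w_ge0)); apply: cone_gen_ext => p /=.
by rewrite phi_w; case: eqP; rewrite ?oner_eq0 ?eqxx.
Qed.

Lemma tau_facet jv : is_facet (sigma_dual pi) (tau pi jv).
Proof.
have [w phi_w] := phi_exists jv.
split; first by exists w; split=> v; [apply: phi_sigma_ge0 | apply: tau_face].
by exists #|off_graph jv|; split; [apply: dim_sigma_dual | apply: dim_tau].
Qed.

Lemma tau_inj jv jv' : (forall v, tau pi jv v <-> tau pi jv' v) -> jv = jv'.
Proof.
move=> eq_tau; apply/ffunP => i; apply/eqP; apply: contraT => jv_neq.
have [w phi_w] := phi_exists jv'.
have /eq_tau/(tau_face _ phi_w)[_] : tau pi jv (gen (i, jv' i)).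
  by apply: cone_gen_gen; rewrite /= eq_sym.
by rewrite phi_w eqxx => /eqP; rewrite oner_eq0.
Qed.

Lemma phi_pi jv w x : is_phi pi jv w -> evalf w (pi x) = \sum_i x i (jv i).
Proof.
move=> phi_w; rewrite pi_gen_sum evalf_sum; under eq_bigr do rewrite evalfZ phi_w.
rewrite -(pair_bigA _ (fun i j => x i j * (j == jv i)%:R)); apply: eq_bigr => i _.
rewrite (bigD1 (jv i)) //= eqxx mulr1 big1 ?addr0 // => j /negbTE ->.
by rewrite mulr0.
Qed.

Lemma phi_ge0_sigma (d_gt0 : (0 < d)%N) (W : {ffun 'I_l -> 'I_d} -> 'cV[R]_n) v :
  (forall x, exists y, pi y = x) -> (forall jv, is_phi pi jv (W jv)) ->
  (forall jv, 0 <= evalf (W jv) v) -> sigma_dual pi v.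
Proof.
move=> pi_surj phi_W; have [x <-] := pi_surj v => W_ge0.
pose jmin := [ffun i => Order.arg_min (Ordinal d_gt0) predT (x i)].
have x_min i j : x i (jmin i) <= x i j.
  by rewrite ffunE; case: arg_minP => // k _; apply.
pose s := \sum_i x i (jmin i).
have s_ge0 : 0 <= s by rewrite /s -(phi_pi x (phi_W jmin)); apply: W_ge0.
pose c i := x i (jmin i) - s / l%:R.
have c_sum0 : \sum_i c i = 0.
  rewrite sumrB sumr_const card_ord -/s -[_ *+ l]mulr_natr divfK ?subrr //.
  by rewrite pnatr_eq0 -lt0n.
pose y := x - \sum_i c i *: eps R d i.
exists (fun p => y p.1 p.2); split=> [[i j] | ].
  rewrite /= !mxE sum_eps_entry subr_ge0 lerBlDr.
  by rewrite ler_wpDr ?x_min // divr_ge0 ?ler0n.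
transitivity (pi y); first by rewrite linearB pi_sum_eps ?subr0.
by rewrite pi_gen_sum.
Qed.

Lemma facet_tau F :
  is_facet (sigma_dual pi) F -> exists jv, forall v, F v <-> tau pi jv v.
Proof.
move=> [[w [w_ge0 def_F]] [k [dim_sigma dim_F]]].
pose a p := evalf w (gen p).
have a_ge0 p : predT p -> 0 <= a p by move=> _; apply/w_ge0/cone_gen_gen.
pose Z : pred ('I_l * 'I_d) := fun p => predT p && (a p == 0).
have F_cone v : F v <-> cone_gen Z gen v.
  exact: iff_trans (def_F v) (cone_gen_face v a_ge0).
have row_sum i : \sum_j a (i, j) = evalf w (pi (eps R d i0)).
  by rewrite -(pi_eps i) /eps linear_sum evalf_sum.
have [w_eps0 | w_eps_neq0] := eqVneq (evalf w (pi (eps R d i0))) 0.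
  have Z_all p : Z p.
    case: p => i j; rewrite /Z /=; move: (row_sum i); rewrite w_eps0.
    by move/(psumr_eq0P (fun j _ => a_ge0 (i, j) isT)) => ->.
  have : dim_span (sigma_dual pi) k.
    by apply: dim_span_ext dim_F => v; apply: iff_trans (F_cone v) (cone_gen_ext _ _ _).
  by move/(dim_span_unique dim_sigma)/esym/n_Sn.
have [jv a_jv] : exists jv : {ffun 'I_l -> 'I_d}, forall i, a (i, jv i) != 0.
  have row_nz i : exists j, a (i, j) != 0.
    apply/existsP; apply: contraNT w_eps_neq0 => /existsPn all0.
    by rewrite -(row_sum i) big1 // => j _; apply/eqP/negbNE/all0.
  by exists [ffun i => xchoose (row_nz i)] => i; rewrite ffunE; exact: (xchooseP (row_nz i)).
have Z_off : Z \subset off_graph jv.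
  apply/subsetP => -[i j]; rewrite !inE /Z /off_graph /= => /eqP aij0.
  by apply: contraNneq (a_jv i) => <-; apply/eqP.
have card_off : #|off_graph jv| = k.
  by apply: succn_inj; apply: dim_span_unique (dim_sigma_dual jv) dim_sigma.
have eq_Z := dim_span_cone_subset_eq (dim_span_ext F_cone dim_F) Z_off card_off.
exists jv => v; apply: iff_trans (F_cone v) (cone_gen_ext _ _ _) => p.
by move: (eq_Z p); rewrite !inE.
Qed.

End GraphBasis.

Unset Implicit Arguments.

Theorem mainTheorem12 (R : realFieldType) (l d : nat) (hl : (0 < l)%N) (hd : (2 <= d)%N)
  (n : nat) (pi : {linear 'M[R]_(l, d) -> 'rV[R]_n})
  (pi_surj : forall v : 'rV[R]_n, exists x, pi x = v)
  (pi_ker : forall x : 'M[R]_(l, d), pi x = 0 <-> in_L (Ordinal hl) x) :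
  (forall jv : {ffun 'I_l -> 'I_d}, is_facet (sigma_dual pi) (tau pi jv)) /\
  (forall jv jv' : {ffun 'I_l -> 'I_d},
     (forall v, tau pi jv v <-> tau pi jv' v) -> jv = jv') /\
  (forall F : 'rV[R]_n -> Prop, is_facet (sigma_dual pi) F ->
     exists jv : {ffun 'I_l -> 'I_d}, forall v, F v <-> tau pi jv v) /\
  (forall jv : {ffun 'I_l -> 'I_d}, exists w : 'cV[R]_n, is_phi pi jv w) /\
  (forall W : {ffun 'I_l -> 'I_d} -> 'cV[R]_n,
     (forall jv, is_phi pi jv (W jv)) ->
     forall v : 'rV[R]_n,
       sigma_dual pi v <-> (forall jv, 0 <= evalf (W jv) v)).
Proof.
split; first exact: tau_facet pi_ker.
split; first exact: tau_inj pi_ker.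
split; first exact: facet_tau pi_ker.
split; first exact: phi_exists pi_ker.
move=> W phi_W v; split=> [sigma_v jv | ]; first exact: phi_sigma_ge0 (phi_W jv) sigma_v.
exact: phi_ge0_sigma pi_ker (ltnW hd) W v pi_surj phi_W.
Qed.
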